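(* Let $M$ be a matroid with set of bases $\mathcal{B}(M)$, and let $<$ be a total order of $\mathcal{B}(M)$. If the induced order $<_\bullet$ of the facets of the dual matroid polytope $P_M^*$ is a shelling order of $P_M^*$, then $<$ is a shelling order of the independence complex $\mathcal{I}(M)$.
   Context: A matroid $M$ on a finite ground set $E$ has independence complex $\mathcal{I}(M)$ (the simplicial complex of independent sets), whose facets are the bases $\mathcal{B}(M)$. For $S\subseteq E$, $\chi_S\in\mathbb{R}^E$ denotes the characteristic vector of $S$. The matroid polytope is $P_M=\mathrm{conv}\{\chi_B : B\in\mathcal{B}(M)\}\subset\mathbb{R}^E$; its vertices are exactly the $\chi_B$. The dual polytope $P_M^*$ is a polytope whose face lattice is the opposite of that of $P_M$; so its facets $F_B$ are in natural bijection with bases $B$ (the facet $F_B$ corresponding to the vertex $\chi_B$). For an order $<$ on $\mathcal{B}(M)$, $<_\bullet$ is the order on facets of $P_M^*$ given by $F_B<_\bullet F_{B'}$ iff $B<B'$. A shelling order of a pure simplicial complex is a total order $F_1<\dots<F_k$ of its facets such that for each $j\ge 2$, the complex $\langle F_1,\dots,F_{j-1}\rangle\cap\langle F_j\rangle$ is pure of dimension one less than the complex (here $\langle\mathcal{G}\rangle$ is the complex generated by $\mathcal{G}$). A shelling of a polygon is an ordering of its edges such that every edge after the first shares a vertex with an earlier edge; a shelling of a polytope of dimension $\ge 3$ is an order $F_1,\dots,F_k$ of its facets such that for each $j\ge2$, $F_j\cap\bigcup_{i<j}F_i$ is a union of facets of $F_j$ forming an initial segment of some shelling order of $F_j$. 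*)

From Stdlib Require Import Rdefinitions.
From HB Require Import structures.
From mathcomp Require Import all_boot all_order all_algebra.
From mathcomp Require Import Rstruct.
Set Implicit Arguments.
Unset Strict Implicit.
Unset Printing Implicit Defensive.
Import Order.TTheory GRing.Theory Num.Theory.

Section Matroids.
Local Open Scope ring_scope.
Variable E : finType.


Definition is_matroid (indep : pred {set E}) : Prop :=
  [/\ indep set0,
      (forall A B : {set E}, indep B -> A \subset B -> indep A) &
      (forall A B : {set E}, indep A -> indep B -> (#|A| < #|B|)%N ->
         exists2 e, e \in B :\: A & indep (e |: A))].

(** Bases: the inclusion-maximal independent sets (= facets of I(M)). *)
Definition is_basis (indep : pred {set E}) (B : {set E}) : bool :=
  indep B && [forall B' : {set E}, (indep B' && (B \subset B')) ==> (B' == B)].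

(** Dimension + 1 of the complex generated by the facets in s. *)
Definition sc_size (s : seq {set E}) : nat := \max_(F <- s) #|F|.

(** s = F_1 < ... < F_k is a shelling order of the complex <F_1,...,F_k>:
    for each j >= 2, <F_1..F_{j-1}> \cap <F_j> is pure of dimension one less
    than the complex, i.e. all its facets have cardinality sc_size s - 1. *)
Definition sc_shelling (s : seq {set E}) : Prop :=
  forall j : nat, (0 < j < size s)%N ->
    let K := fun F : {set E} =>
      F \subset nth set0 s j /\
      exists2 i : nat, (i < j)%N & F \subset nth set0 s i in
    (forall F, K F -> #|F| = (sc_size s).-1 \/
                      exists2 F', K F' & (F \subset F') /\ #|F'| = (sc_size s).-1)
    /\ (forall F, K F -> (#|F| <= (sc_size s).-1)%N).

Definition chi (S : {set E}) : 'rV[R]_#|E| :=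
  \row_(j < #|E|) (if enum_val j \in S then 1 else 0).

(** A set G of bases is (the vertex set of) a nonempty face of
    P_M = conv {chi_B : B basis}: G is the set of bases maximizing some
    linear functional c on R^E. *)
Definition is_face (indep : pred {set E}) (G : {set {set E}}) : Prop :=
  exists c : 'rV[R]_#|E|,
    G = [set B | is_basis indep B &&
          [forall B', is_basis indep B' ==>
              (((c *m (chi B')^T) 0 0) <= ((c *m (chi B)^T) 0 0))]].

(** affine dimension of conv {chi_B : B in G}; the empty set has dim -1 *)
Definition aff_dim (G : {set {set E}}) : int :=
  if G == set0 then (-1) else
  let B0 := odflt set0 [pick B in G] in
  (\rank (\matrix_(i < #|G|) (chi (enum_val i) - chi B0)))%:Z.

Definition all_bases (indep : pred {set E}) : {set {set E}} :=
  [set B | is_basis indep B].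

(** ---------- The dual polytope P_M^dual (combinatorially) ----------
   The face lattice of P_M^dual is the opposite of that of P_M. A nonempty face
   of P_M^dual is represented by the face G of P_M it corresponds to: G ranges
   over the faces of P_M different from P_M itself (P_M corresponds to the
   empty face of P_M^dual), together with G = set0 (the empty face of P_M),
   which represents P_M^dual itself.  Inclusion is reversed, and the face of
   P_M^dual corresponding to G has dimension dim P_M - 1 - dim G. In
   particular the facet F_B of P_M^dual is represented by [set B]. *)

Definition dual_face (indep : pred {set E}) (G : {set {set E}}) : Prop :=
  (G = set0 \/ is_face indep G) /\ G != all_bases indep.

(** H represents a face of P_M^dual contained in the face represented by G *)
Definition dual_sub (indep : pred {set E}) (G H : {set {set E}}) : Prop :=
  dual_face indep H /\ G \subset H.

Definition dual_face_codim (indep : pred {set E}) (l : nat)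
    (G H : {set {set E}}) : Prop :=
  dual_sub indep G H /\ aff_dim H = aff_dim G + l%:Z.

Definition dual_facet (indep : pred {set E}) (G H : {set {set E}}) : Prop :=
  dual_face_codim indep 1 G H.

Definition lists_facets (indep : pred {set E}) (G : {set {set E}})
    (s : seq {set {set E}}) : Prop :=
  uniq s /\ forall H, H \in s <-> dual_facet indep G H.

(** dshell indep k G s: s is a shelling order of the facets of the
    k-dimensional face of P_M^dual represented by G, following the definition:
    - polygon (k = 2): every edge after the first shares a vertex with an
      earlier edge;
    - k >= 3: for every j >= 2 the intersection of F_j with the union of the
      earlier facets is a (nonempty) union of facets of F_j forming an
      initial segment of some shelling order of F_j.
    (For k <= 1 any ordering of the facets counts as a shelling.) *)
Fixpoint dshell (indep : pred {set E}) (k : nat) (G : {set {set E}})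
    (s : seq {set {set E}}) {struct k} : Prop :=
  lists_facets indep G s /\
  match k with
  | 0 => True
  | 1 => True
  | 2 =>
      forall j : nat, (0 < j < size s)%N ->
        exists2 i : nat, (i < j)%N &
          exists H, dual_face_codim indep 2 G H /\
            nth set0 s i \subset H /\ nth set0 s j \subset H
  | k'.+1 =>
      forall j : nat, (0 < j < size s)%N ->
        let Fj := nth set0 s j in
        (* T = facets of F_j contained in some earlier F_i *)
        let T := fun H => dual_facet indep Fj H /\
                    exists2 i : nat, (i < j)%N & nth set0 s i \subset H in
        [/\
            exists H, T H,
            (* F_j \cap F_i is covered by the facets in T, for i < j *)
            (forall (i : nat) H, (i < j)%N -> dual_sub indep Fj H ->
               nth set0 s i \subset H ->
               exists2 H', T H' & H' \subset H) &
            exists t : seq {set {set E}}, exists m : nat,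
              dshell indep k' Fj t /\ forall H, H \in take m t <-> T H]
  end.

End Matroids.

From Stdlib Require Import Rdefinitions.
From HB Require Import structures.
From mathcomp Require Import all_boot all_order all_algebra.
From mathcomp Require Import Rstruct.
From mathcomp Require Import zify ring lra.
Import Order.TTheory GRing.Theory Num.Theory.

Set Implicit Arguments.
Unset Strict Implicit.
Unset Printing Implicit Defensive.

(* Since all bases have the same size, the order is a shelling of I(M) as soon
   as, for i < j, the face B_i :&: B_j of B_j lies in a ridge B_k :&: B_j with
   k < j, i.e. in an earlier basis B_k adjacent to B_j (#|B_j :\: B_k| = 1).
   The facets of F_{B_j} in P_M^* are the edges of P_M at chi B_j, and the
   vertices of an edge are adjacent bases.  The bases containing B_i :&: B_j
   form a face of P_M (the one maximizing chi (B_i :&: B_j)), so the shelling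
   condition for F_{B_j} yields an edge from chi B_j to an earlier vertex
   inside that face: this is B_k.  When P_M is a polygon the shelling
   condition is weaker and a dimension count replaces the face argument. *)

Section PureShelling.
Variable E : finType.

Lemma sc_size_eq_card (s : seq {set E}) B :
  {in s &, forall B1 B2 : {set E}, #|B1| = #|B2|} -> B \in s -> sc_size s = #|B|.
Proof.
move=> eq_card sB; apply/eqP.
rewrite eqn_leq (leq_bigmax_seq (F := fun B : {set E} => #|B|)) // andbT.
by apply/bigmax_leqP_seq => B' sB' _; rewrite (eq_card B' B).
Qed.

Lemma sc_shelling_by_ridges (s : seq {set E}) :
  {in s &, forall B1 B2 : {set E}, #|B1| = #|B2|} ->
  (forall i j, (i < j < size s)%N -> exists2 k, (k < j)%N &
     nth set0 s i :&: nth set0 s j \subset nth set0 s k /\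
     #|nth set0 s j :\: nth set0 s k| = 1%N) ->
  sc_shelling s.
Proof.
move=> eq_card ridges j /andP[j_gt0 j_lt] /=.
set Bj := nth set0 s j.
rewrite (sc_size_eq_card eq_card (mem_nth set0 j_lt)) -/Bj.
have in_ridge (F : {set E}) i : (i < j)%N -> F \subset Bj -> F \subset nth set0 s i ->
    exists2 k, (k < j)%N & F \subset nth set0 s k :&: Bj /\
                           #|nth set0 s k :&: Bj| = #|Bj|.-1.
  move=> lt_ij FBj FBi; have [|k lt_kj [sub_k card_k]] := ridges i j.
    by rewrite lt_ij.
  exists k => //; split.
    by rewrite subsetI FBj andbT (subset_trans _ sub_k) // subsetI FBi.
  by move: (cardsID (nth set0 s k) Bj); rewrite setIC card_k; lia.
split=> F [FBj [i lt_ij FBi]]; have [k lt_kj [FBkj card_kj]] := in_ridge F i lt_ij FBj FBi.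
  right; exists (nth set0 s k :&: Bj) => //.
  by split; [exact: subsetIr | exists k => //; exact: subsetIl].
by rewrite -card_kj subset_leq_card.
Qed.

End PureShelling.

Section MatroidBases.
Variables (E : finType) (indep : pred {set E}).
Hypothesis matroid : is_matroid indep.
Local Notation basis := (is_basis indep).

Lemma basis_indep B : basis B -> indep B.
Proof. by case/andP. Qed.

Lemma basis_maximal B A : basis B -> indep A -> B \subset A -> A = B.
Proof. by case/andP=> _ /forallP max_B iA sBA; apply/eqP; have := max_B A; rewrite iA sBA. Qed.

Lemma card_indep_le_basis B A : basis B -> indep A -> (#|A| <= #|B|)%N.
Proof.
move=> bB iA; rewrite leqNgt; apply/negP => lt_BA.
case: matroid => _ _ augment.
have [e /setDP[eA eB] iBe] := augment B A (basis_indep bB) iA lt_BA.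
by have /setP/(_ e) := basis_maximal bB iBe (subsetUr _ _); rewrite setU11 (negbTE eB).
Qed.

Lemma eq_card_bases B B' : basis B -> basis B' -> #|B| = #|B'|.
Proof.
move=> bB bB'; apply/eqP.
by rewrite eqn_leq !card_indep_le_basis // basis_indep.
Qed.

Lemma basis_of_card B A : basis B -> indep A -> (#|B| <= #|A|)%N -> basis A.
Proof.
move=> bB iA le_BA; rewrite /is_basis iA; apply/forallP => A'.
apply/implyP => /andP[iA' sAA']; rewrite eq_sym eqEcard sAA'.
exact: leq_trans (card_indep_le_basis bB iA') le_BA.
Qed.

Lemma indep_extend_basis B A : basis B -> indep A ->
  exists A', [/\ basis A', A \subset A' & A' \subset A :|: B].
Proof.
move=> bB; move def_n: (#|B| - #|A|)%N => n; elim: n A def_n => [|n IH] A def_n iA.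
  by exists A; rewrite subxx subsetUl; split=> //; apply: basis_of_card bB iA _; lia.
case: matroid => _ _ augment.
have [|e /setDP[eB eA] iAe] := augment A B iA (basis_indep bB); first by lia.
have [|A' [bA' sAA' sA'B]] := IH (e |: A) _ iAe; first by rewrite cardsU1 eA; lia.
exists A'; split=> //; first exact: subset_trans (subsetUr _ _) sAA'.
by apply: subset_trans sA'B _; rewrite -setUA subUset sub1set inE eB orbT subxx.
Qed.

Lemma basis_exchange B B' e : basis B -> basis B' -> e \in B -> e \notin B' ->
  exists2 f, f \in B' :\: B & basis (e |: (B' :\ f)).
Proof.
move=> bB bB' eB eB'.
have iA : indep (e |: (B :&: B')).
  case: matroid => _ indep_sub _; apply: indep_sub (basis_indep bB) _.
  by rewrite subUset sub1set eB subsetIl.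
have [A [bA sA sAB']] := indep_extend_basis bB' iA.
have eA : e \in A by rewrite (subsetP sA) ?setU11.
have cardA : #|A| = #|B'| := eq_card_bases bA bB'.
have [f fB'e fA] : exists2 f, f \in e |: B' & f \notin A.
  apply/subsetPn/negP => /subset_leq_card; rewrite cardA cardsU1 eB'; lia.
have fB' : f \in B' by move: fB'e; rewrite in_setU1 => /predU1P[fe|//]; rewrite fe eA in fA.
have fB : f \notin B.
  by apply: contra fA => fB; rewrite (subsetP sA) // !inE fB fB' orbT.
have sAeB' : A \subset e |: B'.
  apply: subset_trans sAB' _.
  by rewrite subUset setUS ?subsetIr // subsetUr.
exists f; first by rewrite inE fB fB'.
suff -> : e |: (B' :\ f) = A by [].
apply/esym/eqP; rewrite eqEcard; apply/andP; split.
  apply/subsetP => x xA; have := subsetP sAeB' x xA; rewrite !inE.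
  case/predU1P=> [->|xB']; rewrite ?eqxx // xB' andbT; apply/orP; right.
  by apply: contraNneq _ fA => <-.
by rewrite cardsU1 in_setD1 (negbTE eB') andbF cardA (cardsD1 f B') fB'.
Qed.

Lemma card_setD_bases B B' : basis B -> basis B' -> #|B :\: B'| = #|B' :\: B|.
Proof.
move=> bB bB'; move: (cardsID B' B) (cardsID B B').
by rewrite (eq_card_bases bB bB') setIC; lia.
Qed.

Lemma card_setD_bases_gt0 B B' : basis B -> basis B' -> B != B' -> (0 < #|B :\: B'|)%N.
Proof.
move=> bB bB' neqBB'; rewrite card_gt0 setD_eq0.
by apply: contra neqBB' => /(basis_maximal bB (basis_indep bB')) ->.
Qed.

Lemma nonadjacent_exchange B B' : basis B -> basis B' -> B != B' -> #|B' :\: B| != 1%N ->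
  exists e g f, [/\ e \in B :\: B', g \in (B :\: B') :\ e, f \in B' :\: B
                  & basis (e |: (B' :\ f))].
Proof.
move=> bB bB' neqBB' nadj.
have card_gt1 : (1 < #|B :\: B'|)%N.
  by rewrite (card_setD_bases bB bB') ltn_neqAle eq_sym nadj card_setD_bases_gt0 // eq_sym.
have [e eBB'] : exists e, e \in B :\: B' by apply/set0Pn; rewrite -card_gt0; lia.
have [g gBB'e] : exists g, g \in (B :\: B') :\ e.
  by apply/set0Pn; rewrite -card_gt0; move: card_gt1; rewrite (cardsD1 e) eBB'.
have /setDP[eB eB'] := eBB'.
have [f fB'B bX] := basis_exchange bB bB' eB eB'.
by exists e, g, f.
Qed.

End MatroidBases.

Section VertexGeometry.
Local Open Scope ring_scope.

Lemma mxrank_ge_trig (F : fieldType) m n p (A : 'M[F]_(p, n))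
    (u : 'I_m -> 'rV[F]_n) (c : 'I_m -> 'I_n) :
  (forall k, (u k <= A)%MS) ->
  (forall k l : 'I_m, (k < l)%N -> u k 0 (c l) = 0) ->
  (forall k, u k 0 (c k) != 0) ->
  (m <= \rank A)%N.
Proof.
move=> uA trig diag.
pose D := \matrix_k u k.
have unit_Dc : colsub c D \in unitmx.
  rewrite unitmxE det_trig; last by apply/is_trig_mxP => k l lt_kl; rewrite !mxE trig.
  by rewrite unitfE; apply/prodf_neq0 => k _; rewrite !mxE diag.
have DA : (D <= A)%MS by apply/row_subP => k; rewrite rowK uA.
rewrite -(mxrank_unit unit_Dc) -[D]mulmx1 -mulmx_colsub.
exact: leq_trans (mxrankM_maxl _ _) (mxrankS DA).
Qed.

Variable E : finType.

Lemma chiE (X : {set E}) x : chi X 0 (enum_rank x) = (x \in X)%:R.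
Proof. by rewrite mxE enum_rankK; case: (x \in X). Qed.

Lemma chiBE (X Z : {set E}) x :
  (chi X - chi Z) 0 (enum_rank x) = (x \in X)%:R - (x \in Z)%:R.
Proof. by rewrite !mxE enum_rankK; case: (x \in X); case: (x \in Z). Qed.

Definition aff_mx (G : {set {set E}}) :=
  \matrix_(i < #|G|) (chi (enum_val i) - chi (odflt set0 [pick B in G])).

Lemma aff_dimE (G : {set {set E}}) : G != set0 -> aff_dim G = (\rank (aff_mx G))%:Z.
Proof. by rewrite /aff_dim => /negbTE ->. Qed.

Lemma aff_dim_set0 : aff_dim (set0 : {set {set E}}) = -1.
Proof. by rewrite /aff_dim eqxx. Qed.

Lemma aff_dim_set1 (B : {set E}) : aff_dim [set B] = 0.
Proof.
rewrite aff_dimE; last by apply/set0Pn; exists B; rewrite inE.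
suff -> : aff_mx [set B] = 0 by rewrite mxrank0.
apply/matrixP => i j; rewrite !mxE; have /set1P -> := enum_valP i.
by case: pickP => [_ /set1P -> | /(_ B)]; rewrite ?set11 ?subrr.
Qed.

Lemma chiB_sub_aff_mx (G : {set {set E}}) X Z :
  X \in G -> Z \in G -> (chi X - chi Z <= aff_mx G)%MS.
Proof.
move=> GX GZ; set B0 := odflt set0 [pick B in G].
have row_aff Y (GY : Y \in G) : chi Y - chi B0 = row (enum_rank_in GY Y) (aff_mx G).
  by rewrite rowK enum_rankK_in.
have -> : chi X - chi Z = (chi X - chi B0) - (chi Z - chi B0).
  by rewrite opprB addrA subrK.
by rewrite (row_aff X) // (row_aff Z) // addmx_sub ?eqmx_opp // row_sub.
Qed.

Lemma aff_rank_ge2 (G : {set {set E}}) X Y Z e g : X \in G -> Y \in G -> Z \in G ->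
  e \in X -> e \in Y -> e \notin Z -> g \notin X -> g \in Y -> g \notin Z ->
  (2 <= \rank (aff_mx G))%N.
Proof.
move=> GX GY GZ eX eY eZ gX gY gZ.
apply: (@mxrank_ge_trig _ _ _ _ _ (fun k => (chi (nth X [:: X; Y] k) - chi Z))
          (fun k => enum_rank (nth e [:: e; g] k))).
- by move=> k; apply: chiB_sub_aff_mx; case: k => [[|[|]]].
- by move=> [[|[|//]] ?] [[|[|//]] ?] //= _; rewrite chiBE ?(negbTE gX) ?(negbTE gZ) subrr.
- by move=> [[|[|//]] ?]; rewrite chiBE /= ?eX ?gY ?(negbTE eZ) ?(negbTE gZ) subr0 oner_eq0.
Qed.

Lemma aff_rank_ge3 (G : {set {set E}}) X Y W Z e g x :
  X \in G -> Y \in G -> W \in G -> Z \in G ->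
  e \in X -> e \in Y -> e \notin Z -> g \notin X -> g \in Y -> g \notin Z ->
  x \in X -> x \in Y -> x \notin W -> x \in Z ->
  (3 <= \rank (aff_mx G))%N.
Proof.
move=> GX GY GW GZ eX eY eZ gX gY gZ xX xY xW xZ.
apply: (@mxrank_ge_trig _ _ _ _ _ (fun k => (chi (nth X [:: X; Y; W] k) - chi Z))
          (fun k => enum_rank (nth e [:: e; g; x] k))).
- by move=> k; apply: chiB_sub_aff_mx; case: k => [[|[|[|]]]].
- move=> [[|[|[|//]]] ?] [[|[|[|//]]] ?] //= _; rewrite chiBE;
    by rewrite ?(negbTE gX) ?(negbTE gZ) ?xX ?xY ?xZ subrr.
- move=> [[|[|[|//]]] ?]; rewrite chiBE /=;
    by rewrite ?eX ?gY ?(negbTE eZ) ?(negbTE gZ) ?(negbTE xW) ?xZ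
               ?subr0 ?sub0r ?oppr_eq0 oner_eq0.
Qed.

Definition weight (c : 'rV[R]_#|E|) (B : {set E}) : R := (c *m (chi B)^T) 0 0.

Lemma weightE c B : weight c B = \sum_(x in B) c 0 (enum_rank x).
Proof.
rewrite /weight mxE (reindex (@enum_rank E)) /=; last first.
  by exists (@enum_val _ _) => x _; rewrite ?enum_rankK ?enum_valK.
rewrite [RHS]big_mkcond /=; apply: eq_bigr => x _.
by rewrite !mxE enum_rankK; case: (x \in B); rewrite ?mulr1 ?mulr0.
Qed.

Lemma weight_exchange c (B : {set E}) e f : e \notin B -> f \in B ->
  weight c (e |: (B :\ f)) = weight c B - c 0 (enum_rank f) + c 0 (enum_rank e).
Proof.
move=> eB fB; rewrite !weightE big_setU1 /=; last by rewrite !inE negb_and eB orbT.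
by rewrite [in RHS](big_setD1 f fB) /=; ring.
Qed.

Lemma weight_chi (I B : {set E}) : weight (chi I) B = #|B :&: I|%:R.
Proof.
rewrite weightE (eq_bigr (fun x => (x \in I)%:R)) => [|x _]; last exact: chiE.
by rewrite -natr_sum -sum1_card big_mkcond [in RHS]big_mkcond /=; congr _%:R;
  apply: eq_bigr => x _; rewrite inE; case: (x \in B); case: (x \in I).
Qed.

End VertexGeometry.

Section MatroidFaces.
Variables (E : finType) (indep : pred {set E}).
Hypothesis matroid : is_matroid indep.
Local Notation basis := (is_basis indep).
Local Open Scope ring_scope.

Definition max_face (c : 'rV[R]_#|E|) : {set {set E}} :=
  [set B | basis B && [forall B', basis B' ==> (weight c B' <= weight c B)]].

Lemma max_faceP c B :
  reflect (basis B /\ forall B', basis B' -> weight c B' <= weight c B)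
          (B \in max_face c).
Proof.
rewrite inE; apply: (iffP andP) => [[bB /forallP maxB]|[bB maxB]]; split=> //.
  by move=> B'; apply/implyP.
by apply/forallP => B'; apply/implyP/maxB.
Qed.

Lemma max_face_chi (I B0 B : {set E}) : basis B0 -> I \subset B0 ->
  (B \in max_face (chi I)) = basis B && (I \subset B).
Proof.
move=> bB0 IB0; apply/max_faceP/andP => [[bB maxB]|[bB IB]]; split=> //.
  have := maxB B0 bB0; rewrite !weight_chi ler_nat (setIidPr IB0) => le_IB.
  have /eqP <- : B :&: I == I by rewrite eqEcard subsetIr.
  exact: subsetIl.
by move=> B' _; rewrite !weight_chi ler_nat (setIidPr IB) subset_leq_card ?subsetIr.
Qed.

(* Exchanging the [c]-heaviest element of [B' :\: B] into [B] costs nothing, so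
   the result lies on the face as well and spans a second direction. *)
Lemma flat_face_adjacent c B B' : (\rank (aff_mx (max_face c)) <= 1)%N ->
  B \in max_face c -> B' \in max_face c -> B != B' -> #|B' :\: B| = 1%N.
Proof.
move=> rank_le1 GB GB' neqBB'; apply/eqP; apply: contraTT rank_le1 => nadj.
have /max_faceP[bB maxB] := GB; have /max_faceP[bB' maxB'] := GB'.
have card_gt1 : (1 < #|B' :\: B|)%N.
  by rewrite ltn_neqAle eq_sym nadj (card_setD_bases_gt0 bB' bB) // eq_sym.
have [e0 e0B'B] : exists e, e \in B' :\: B by apply/set0Pn; rewrite -card_gt0; lia.
case: (arg_maxP (fun e => c 0 (enum_rank e)) e0B'B) => e eB'B max_e.
have /setDP[eB' eB] := eB'B.
have [f /setDP[fB fB'] bX] := basis_exchange matroid bB' bB eB' eB.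
have [e' e'B'B bY] := basis_exchange matroid bB bB' fB fB'.
have le_ef := maxB _ bX; rewrite weight_exchange // in le_ef.
have le_fe' := maxB' _ bY; rewrite weight_exchange // in le_fe'; last by case/setDP: e'B'B.
have le_e'e : c 0 (enum_rank e') <= c 0 (enum_rank e) := max_e e' e'B'B.
have GX : e |: (B :\ f) \in max_face c.
  by apply/max_faceP; split=> // B2 bB2; rewrite weight_exchange //; have := maxB B2 bB2; lra.
have [g /setD1P[ge /setDP[gB' gB]]] : exists g, g \in (B' :\: B) :\ e.
  by apply/set0Pn; rewrite -card_gt0; move: card_gt1; rewrite (cardsD1 e) in_setD eB eB'.
rewrite -ltnNge; apply: (aff_rank_ge2 GX GB' GB (setU11 _ _) eB' eB _ gB' gB).
by rewrite !inE (negbTE ge) (negbTE gB) andbF.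
Qed.

Lemma dual_face_basis H B : dual_face indep H -> B \in H -> basis B.
Proof.
move=> [[-> | [c defH]] _]; first by rewrite inE.
by have {}defH : H = max_face c := defH; rewrite defH => /max_faceP[].
Qed.

Lemma dual_edge_adjacent H B B' : dual_face indep H -> aff_dim H = 1 ->
  B \in H -> B' \in H -> B != B' -> #|B' :\: B| = 1%N.
Proof.
move=> [[-> | [c defH]] _] dimH HB; first by rewrite inE in HB.
have {}defH : H = max_face c := defH; subst H.
rewrite aff_dimE in dimH; last by apply/set0Pn; exists B.
by apply: flat_face_adjacent HB; case: dimH => ->.
Qed.

Lemma dual_facet_set1 B H : dual_facet indep [set B] H ->
  [/\ dual_face indep H, B \in H & aff_dim H = 1].
Proof. by case=> [[faceH]]; rewrite sub1set aff_dim_set1. Qed.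

Lemma nonadjacent_aff_rank_ge2 B B' : basis B -> basis B' -> B != B' ->
  #|B' :\: B| != 1%N -> (2 <= \rank (aff_mx (all_bases indep)))%N.
Proof.
move=> bB bB' neqBB' nadj.
have [e [g [f [/setDP[eB eB'] /setD1P[ge /setDP[gB gB']] /setDP[fB' fB] bX]]]] :=
  nonadjacent_exchange matroid bB bB' neqBB' nadj.
apply: (@aff_rank_ge2 _ _ (e |: (B' :\ f)) B B' e g); rewrite ?inE ?eqxx //.
by rewrite (negbTE ge) (negbTE gB') andbF.
Qed.

Lemma nonadjacent_aff_rank_ge3 B B' W x : basis B -> basis B' -> basis W -> B != B' ->
  #|B' :\: B| != 1%N -> x \in B :&: B' -> x \notin W ->
  (3 <= \rank (aff_mx (all_bases indep)))%N.
Proof.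
move=> bB bB' bW neqBB' nadj /setIP[xB xB'] xW.
have [e [g [f [/setDP[eB eB'] /setD1P[ge /setDP[gB gB']] /setDP[fB' fB] bX]]]] :=
  nonadjacent_exchange matroid bB bB' neqBB' nadj.
apply: (@aff_rank_ge3 _ _ (e |: (B' :\ f)) B W B' e g x); rewrite ?inE ?eqxx ?xB' //.
- by rewrite (negbTE ge) (negbTE gB') andbF.
- by rewrite andbT; apply/orP; right; apply: contraNneq _ fB => <-.
Qed.

End MatroidFaces.

Section DualShelling.
Variables (E : finType) (indep : pred {set E}).
Hypothesis matroid : is_matroid indep.
Variable s : seq {set E}.
Hypotheses (s_uniq : uniq s) (s_bases : forall B, B \in s = is_basis indep B).
Local Notation b k := (nth set0 s k).
Local Notation facets := [seq [set B] | B <- s].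
Local Notation all_rank := (\rank (aff_mx (all_bases indep))).

Lemma nth_facets k : (k < size s)%N -> nth set0 facets k = [set b k].
Proof. by move=> lt_ks; rewrite (nth_map set0). Qed.

Lemma basis_nth k : (k < size s)%N -> is_basis indep (b k).
Proof. by move=> lt_ks; rewrite -s_bases mem_nth. Qed.

Lemma nth_neq i j : (i < j < size s)%N -> b i != b j.
Proof.
case/andP=> lt_ij lt_js.
by rewrite nth_uniq ?(ltn_trans lt_ij lt_js) // neq_ltn lt_ij.
Qed.

(* An earlier neighbour missing a point of [b i :&: b j] would give P_M a
   third dimension. *)
Lemma polygon_shelling_ridges i j :
  all_rank = 2%N -> dshell indep 2 set0 facets -> (i < j < size s)%N ->
  #|b j :\: b i| != 1%N ->
  exists2 k, (k < j)%N & b i :&: b j \subset b k /\ #|b j :\: b k| = 1%N.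
Proof.
move=> rank2 [_ shell] ij nadj; have /andP[lt_ij lt_js] := ij.
have [|k lt_kj [H [[[faceH _] dimH] [Hk Hj]]]] := shell j.
  by rewrite size_map (leq_ltn_trans _ lt_ij) ?lt_js.
have lt_ks := ltn_trans lt_kj lt_js.
rewrite !nth_facets // !sub1set in Hk Hj.
have neq_kj : b k != b j by apply: nth_neq; rewrite lt_kj.
exists k => //; split.
  apply/subsetP => x xij; apply/negPn/negP => xk.
  have := nonadjacent_aff_rank_ge3 matroid (basis_nth (ltn_trans lt_ij lt_js))
            (basis_nth lt_js) (basis_nth lt_ks) (nth_neq ij) nadj xij xk.
  by rewrite rank2.
by apply: (dual_edge_adjacent matroid) faceH _ Hk Hj neq_kj; rewrite dimH aff_dim_set0.
Qed.

(* When [max_face (chi I)] is all of P_M it is not a face of P_M^*, and any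
   edge supplied by the shelling condition lies in it. *)
Lemma dshell_ge3_ridges n i j : dshell indep n.+3 set0 facets -> (i < j < size s)%N ->
  exists2 k, (k < j)%N & b i :&: b j \subset b k /\ #|b j :\: b k| = 1%N.
Proof.
move=> [_ shell] ij; have /andP[lt_ij lt_js] := ij.
have lt_is := ltn_trans lt_ij lt_js.
have [|[H0 TH0] cover _] := shell j.
  by rewrite size_map (leq_ltn_trans _ lt_ij) ?lt_js.
rewrite nth_facets // in TH0 cover.
set I := b i :&: b j.
have max_I B : (B \in max_face indep (chi I)) = is_basis indep B && (I \subset B).
  exact: max_face_chi (basis_nth lt_is) (subsetIl _ _).
have [H [facetH [k lt_kj Hk]] sub_H] : exists2 H,
    dual_facet indep [set b j] H /\ exists2 k, (k < j)%N & nth set0 facets k \subset H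
    & H \subset max_face indep (chi I).
  have [maxI_all | maxI_proper] := eqVneq (max_face indep (chi I)) (all_bases indep).
    exists H0 => //; rewrite maxI_all; apply/subsetP => B H0B; rewrite inE.
    by case: TH0 => /dual_facet_set1[faceH0 _ _] _; exact: dual_face_basis faceH0 H0B.
  apply: cover lt_ij _ _; last by rewrite nth_facets // sub1set max_I basis_nth // subsetIl.
  split; last by rewrite sub1set max_I basis_nth // subsetIr.
  by split=> //; right; exists (chi I).
have lt_ks := ltn_trans lt_kj lt_js.
rewrite nth_facets // sub1set in Hk.
have [faceH Hj dimH] := dual_facet_set1 facetH.
exists k => //; split.
  by have := subsetP sub_H _ Hk; rewrite max_I => /andP[].
by apply: (dual_edge_adjacent matroid) faceH dimH Hk Hj _; apply: nth_neq; rewrite lt_kj.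
Qed.

Lemma dual_shelling_ridges i j :
  dshell indep `|aff_dim (all_bases indep)|%N set0 facets -> (i < j < size s)%N ->
  exists2 k, (k < j)%N & b i :&: b j \subset b k /\ #|b j :\: b k| = 1%N.
Proof.
move=> shell ij; have /andP[lt_ij lt_js] := ij.
have [adj | nadj] := eqVneq #|b j :\: b i| 1%N; first by exists i; rewrite ?subsetIl.
have rank_ge2 := nonadjacent_aff_rank_ge2 matroid (basis_nth (ltn_trans lt_ij lt_js))
                   (basis_nth lt_js) (nth_neq ij) nadj.
move: shell; rewrite aff_dimE; last by apply/set0Pn; exists (b j); rewrite inE basis_nth.
case def_r: all_rank rank_ge2 => [|[|[|n]]] // _ shell.
  exact: polygon_shelling_ridges def_r shell ij nadj.
exact: dshell_ge3_ridges shell ij.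
Qed.

End DualShelling.

Theorem theorem1p1 (E : finType) (indep : pred {set E}) (s : seq {set E}) :
  is_matroid indep ->
  uniq s ->
  (forall B, B \in s = is_basis indep B) ->
  dshell indep `|aff_dim (all_bases indep)|%N set0 [seq [set B] | B <- s] ->
  sc_shelling s.
Proof.
move=> matroid s_uniq s_bases shell.
apply: sc_shelling_by_ridges => [B B' | i j ij].
  by rewrite !s_bases; exact: eq_card_bases.
exact: (dual_shelling_ridges matroid s_uniq s_bases shell ij).
Qed.
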